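(* Let $\tilde{\mathcal P}$ be a delayed-reward MDP with episodic reward and let $\mathcal P$ be an SDP obtained from $\tilde{\mathcal P}$ by a (possibly higher order Markov) reward redistribution such that $\mathcal P$ is strictly return-equivalent to $\tilde{\mathcal P}$. Fix a policy $\pi$ and assume the reward redistribution is optimal, i.e. $\kappa(T-t-1,t)=0$ for $0\le t\le T-1$. Suppose further that for all $0\le t\le T$ and all histories with positive probability under $\pi$, $$\mathbb E_\pi\left[\sum_{\tau=0}^{T-t-1}R_{t+2+\tau}\mid s_t,a_t\right]=\mathbb E_\pi\left[\sum_{\tau=0}^{T-t-1}R_{t+2+\tau}\mid s_0,a_0,\dots,s_t,a_t\right].$$ Then for all $1\le t\le T$, $$\mathbb E_\pi\left[R_{t+1}\mid s_{t-1},a_{t-1},s_t,a_t\right]=\tilde q^\pi(s_t,a_t)-\tilde q^\pi(s_{t-1},a_{t-1}).$$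
   Context: Setting: finite horizon $T$, discount $\gamma=1$, finite state set $\mathcal S$ and action set $\mathcal A$; states are time-aware. Episodes are $s_0,a_0,R_1,s_1,a_1,R_2,\dots,s_T,a_T,R_{T+1}$. The MDP $\tilde{\mathcal P}$ has Markov transition-reward distribution $p(s_{t+1},\tilde R_{t+1}\mid s_t,a_t)$ and episodic (delayed) reward: $\tilde R_{t+1}=0$ for $t<T$, so the return is $\tilde G_0=\tilde R_{T+1}$. A sequence-Markov decision process (SDP) is a decision process with the same Markov state transition probabilities but whose reward $R_{t+1}$ may depend on the whole history $(s_0,a_0,\dots,s_t,a_t)$ (higher order Markov reward), drawn conditionally on that history and independently of later states and actions; a reward redistribution produces such an SDP $\mathcal P$ with rewards $R_{1},\dots,R_{T+1}$ and return $G_0=\sum_{t=0}^{T}R_{t+1}$. Two SDPs are strictly return-equivalent if for every policy they have the same expected return at $t=0$ and additionally the same expected return for every episode, i.e. $\mathbb E[\tilde G_0\mid s_0,a_0,\dots,s_T,a_T]=\mathbb E[G_0\mid s_0,a_0,\dots,s_T,a_T]$. For a policy $\pi(a\mid s)$, $\mathbb E_\pi[\cdot\mid\ldots]$ is the expectation over episodes generated by $p$ and $\pi$ containing the conditioned state-action pairs at the indicated times. $\tilde q^\pi(s_t,a_t)=\mathbb E_\pi[\sum_{k=0}^{T-t}\tilde R_{t+k+1}\mid s_t,a_t]=\mathbb E_\pi[\tilde R_{T+1}\mid s_t,a_t]$ is the $Q$-function of $\tilde{\mathcal P}$. The expected future rewards are $\kappa(m,t-1)=\mathbb E_\pi\left[\sum_{\tau=0}^{m}R_{t+1+\tau}\mid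 s_{t-1},a_{t-1}\right]$ (redistributed rewards of $\mathcal P$), and a reward redistribution is called optimal if $\kappa(T-t-1,t)=0$ for $0\le t\le T-1$. *)

From HB Require Import structures.
From mathcomp Require Import all_boot all_order all_algebra.
Set Implicit Arguments. Unset Strict Implicit. Unset Printing Implicit Defensive.
Import Order.TTheory GRing.Theory Num.Theory.
Local Open Scope ring_scope.

Definition episode (S A : finType) (T : nat) := {ffun 'I_T.+1 -> S * A}.

Definition sa (S A : finType) (T : nat) (e : episode S A T) (t : nat) : S * A :=
  e (inord t).

Definition is_dist (R : realFieldType) (X : finType) (p : X -> R) : Prop :=
  (forall x, 0 <= p x) /\ \sum_(x : X) p x = 1.

(* Probability of an episode under initial distribution p0, Markov
   transition probabilities P s a s' = p(s'|s,a), and policy pol s a = pi(a|s). *)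
Definition epprob (R : realFieldType) (S A : finType) (T : nat)
  (p0 : S -> R) (P : S -> A -> S -> R) (pol : S -> A -> R)
  (e : episode S A T) : R :=
  p0 (sa e 0).1 * pol (sa e 0).1 (sa e 0).2 *
  \prod_(t < T) (P (sa e t).1 (sa e t).2 (sa e t.+1).1 *
                 pol (sa e t.+1).1 (sa e t.+1).2).

Definition Pr (R : realFieldType) (S A : finType) (T : nat)
  (p0 : S -> R) (P : S -> A -> S -> R) (pol : S -> A -> R)
  (B : pred (episode S A T)) : R :=
  \sum_(e | B e) epprob p0 P pol e.

(* Conditional expectation E_pi[X | B] (meaningful when Pr B > 0). *)
Definition cexp (R : realFieldType) (S A : finType) (T : nat)
  (p0 : S -> R) (P : S -> A -> S -> R) (pol : S -> A -> R)
  (B : pred (episode S A T)) (X : episode S A T -> R) : R :=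
  (\sum_(e | B e) epprob p0 P pol e * X e) / Pr p0 P pol B.

Definition ev_at (S A : finType) (T : nat) (t : nat) (s : S) (a : A)
  : pred (episode S A T) := fun e => sa e t == (s, a).

Definition ev_at2 (S A : finType) (T : nat) (t : nat) (s : S) (a : A)
  (s' : S) (a' : A) : pred (episode S A T) :=
  fun e => (sa e t.-1 == (s, a)) && (sa e t == (s', a')).

Definition ev_hist (S A : finType) (T : nat) (t : nat) (e0 : episode S A T)
  : pred (episode S A T) := fun e => [forall i : 'I_T.+1, (i <= t)%N ==> (e i == e0 i)].

(* Redistributed rewards: r t e is the (conditional mean of the) reward
   R_{t+1}, depending on the history up to time t only. *)
Definition history_dependent (R : realFieldType) (S A : finType) (T : nat)
  (r : nat -> episode S A T -> R) : Prop :=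
  forall t (e e' : episode S A T),
    (forall i : 'I_T.+1, (i <= t)%N -> e i = e' i) -> r t e = r t e'.

Definition ret (R : realFieldType) (S A : finType) (T : nat)
  (r : nat -> episode S A T -> R) (e : episode S A T) : R :=
  \sum_(k < T.+1) r k e.

(* Future rewards sum_{tau=0}^{T-t-1} R_{t+2+tau} = sum_{k=t+1}^{T} R_{k+1} *)
Definition future (R : realFieldType) (S A : finType) (T : nat)
  (r : nat -> episode S A T -> R) (t : nat) (e : episode S A T) : R :=
  \sum_(t.+1 <= k < T.+1) r k e.

(* Delayed return tilde G_0 = tilde R_{T+1}, with conditional mean rT(s_T,a_T) *)
Definition dret (R : realFieldType) (S A : finType) (T : nat)
  (rT : S -> A -> R) (e : episode S A T) : R :=
  rT (sa e T).1 (sa e T).2.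

Definition qtilde (R : realFieldType) (S A : finType) (T : nat)
  (p0 : S -> R) (P : S -> A -> S -> R) (pol : S -> A -> R)
  (rT : S -> A -> R) (t : nat) (s : S) (a : A) : R :=
  cexp p0 P pol (@ev_at S A T t s a) (dret rT).

(** For an episode e of positive probability and k <= T, condition on the whole
    history of e up to time k.  By strict return-equivalence the delayed return
    equals the redistributed return, whose first k+1 terms are fixed by the
    history and whose remaining terms have conditional mean zero (optimality
    together with the history-independence hypothesis); so this conditional
    expectation is the partial return R_1 + ... + R_(k+1) of e.  By the Markov
    property it is also q~(s_k, a_k).  Subtracting the cases k = t and k = t - 1
    shows that R_(t+1) is the constant q~(s_t, a_t) - q~(s_(t-1), a_(t-1)) on
    every positive-probability episode through the given two state-action
    pairs. *)

From HB Require Import structures.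
From mathcomp Require Import all_boot all_order all_algebra.
From mathcomp Require Import ring.
Set Implicit Arguments. Unset Strict Implicit. Unset Printing Implicit Defensive.
Import Order.TTheory GRing.Theory Num.Theory.
Local Open Scope ring_scope.

Section EpisodeProbability.
Variables (R : realFieldType) (S A : finType) (T : nat)
  (p0 : S -> R) (P : S -> A -> S -> R) (pol : S -> A -> R).
Local Notation ep := (episode S A T).
Local Notation epprob := (epprob p0 P pol).
Local Notation Pr := (Pr p0 P pol).
Local Notation cexp := (cexp p0 P pol).

Definition splice k (e1 e2 : ep) : ep :=
  [ffun i : 'I_T.+1 => if (i <= k)%N then e1 i else e2 i].

Definition past_determined {X : Type} k (g : ep -> X) :=
  forall e1 e2, g (splice k e1 e2) = g e1.

Definition future_determined {X : Type} k (f : ep -> X) :=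
  forall e1 e2, sa e1 k = sa e2 k -> f (splice k e1 e2) = f e2.

Lemma sa_splice k e1 e2 j : (j <= T)%N ->
  sa (splice k e1 e2) j = if (j <= k)%N then sa e1 j else sa e2 j.
Proof. by move=> jT; rewrite /sa ffunE inordK. Qed.

Lemma spliceK k e1 e2 : splice k (splice k e1 e2) (splice k e2 e1) = e1.
Proof. by apply/ffunP => i; rewrite !ffunE; case: (i <= k)%N. Qed.

Definition step_weight i (e : ep) :=
  P (sa e i).1 (sa e i).2 (sa e i.+1).1 * pol (sa e i.+1).1 (sa e i.+1).2.

Definition head_weight k (e : ep) :=
  p0 (sa e 0).1 * pol (sa e 0).1 (sa e 0).2 * \prod_(0 <= i < k) step_weight i e.

Definition tail_weight k (e : ep) := \prod_(k <= i < T) step_weight i e.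

Lemma epprob_split k e : (k <= T)%N -> epprob e = head_weight k e * tail_weight k e.
Proof.
move=> kT; rewrite /head_weight /tail_weight -mulrA -(big_cat_nat (leq0n k) kT).
by rewrite big_mkord.
Qed.

Lemma head_weight_splice k e1 e2 : (k <= T)%N ->
  head_weight k (splice k e1 e2) = head_weight k e1.
Proof.
move=> kT; have E j : (j <= k)%N -> sa (splice k e1 e2) j = sa e1 j.
  by move=> jk; rewrite sa_splice ?jk // (leq_trans jk kT).
rewrite /head_weight !E //; congr (_ * _); apply: eq_big_nat => i /andP[_ ik].
by rewrite /step_weight !E // ltnW.
Qed.

Lemma tail_weight_splice k e1 e2 : (k <= T)%N -> sa e1 k = sa e2 k ->
  tail_weight k (splice k e1 e2) = tail_weight k e2.
Proof.
move=> kT e12; have E j : (k <= j <= T)%N -> sa (splice k e1 e2) j = sa e2 j.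
  case/andP=> kj jT; rewrite sa_splice //; case: ifP => // jk.
  by have -> : j = k by apply/eqP; rewrite eqn_leq jk kj.
rewrite /tail_weight; apply: eq_big_nat => i /andP[ki iT].
by rewrite /step_weight !E // ?(leqW ki) ?ki ?(ltnW iT).
Qed.

(** The Markov property of the dynamics, in exchange form. *)
Lemma epprob_splice_pair k e1 e2 : (k <= T)%N -> sa e1 k = sa e2 k ->
  epprob (splice k e1 e2) * epprob (splice k e2 e1) = epprob e1 * epprob e2.
Proof.
move=> kT e12; rewrite !(epprob_split _ kT) !head_weight_splice //.
by rewrite !tail_weight_splice //; ring.
Qed.

(** Reindex the double sum over pairs of episodes by exchanging their futures
    after time [k]. *)
Lemma wsum_markov k s a (B : pred ep) (f : ep -> R) : (k <= T)%N ->
  past_determined k B -> (forall e, B e -> ev_at k s a e) -> future_determined k f ->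
  (\sum_(e | B e) epprob e * f e) * Pr (@ev_at S A T k s a)
  = Pr B * \sum_(e | ev_at k s a e) epprob e * f e.
Proof.
move=> kT pastB Bat futf; rewrite /Pr big_distrl big_distrl /=.
under eq_bigr do rewrite big_distrr /=.
under [RHS]eq_bigr do rewrite big_distrr /=.
rewrite !pair_big_dep /=.
pose swap (p : ep * ep) := (splice k p.1 p.2, splice k p.2 p.1).
have swapK : involutive swap by case=> e1 e2; rewrite /swap /= !spliceK.
rewrite [RHS](reindex_inj (inv_inj swapK)) /=.
apply: eq_big => [[e1 e2]|[e1 e2] /andP[B1 at2]] /=.
  by rewrite pastB /ev_at sa_splice // leqnn.
have e21 : sa e2 k = sa e1 k by rewrite (eqP at2) (eqP (Bat _ B1)).
by rewrite futf // mulrA (epprob_splice_pair kT (esym e21)) mulrAC.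
Qed.

Lemma cexp_markov k s a (B : pred ep) (f : ep -> R) : (k <= T)%N ->
  past_determined k B -> (forall e, B e -> ev_at k s a e) -> future_determined k f ->
  Pr B != 0 -> Pr (@ev_at S A T k s a) != 0 -> cexp B f = cexp (@ev_at S A T k s a) f.
Proof.
move=> kT pastB Bat futf PrB Prat; apply/eqP; rewrite /cexp eqr_div //.
by apply/eqP; rewrite [RHS]mulrC; apply: wsum_markov.
Qed.

Lemma ev_hist_refl k (e : ep) : ev_hist k e e.
Proof. by apply/forallP => i; rewrite eqxx implybT. Qed.

Lemma ev_hist_past k (e0 : ep) : past_determined k (ev_hist k e0).
Proof.
move=> e1 e2; apply: eq_forallb => i.
by rewrite ffunE; case: ifP.
Qed.

Lemma ev_hist_at k (e0 e : ep) : (k <= T)%N ->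
  ev_hist k e0 e -> ev_at k (sa e0 k).1 (sa e0 k).2 e.
Proof.
move=> kT /forallP/(_ (inord k)); rewrite inordK ?ltnS // leqnn /=.
by rewrite /ev_at -surjective_pairing.
Qed.

Lemma dret_future (rT : S -> A -> R) k : (k <= T)%N -> future_determined k (dret rT).
Proof.
move=> kT e1 e2 e12; rewrite /dret sa_splice //; case: ifP => // Tk.
have kE : k = T by apply/eqP; rewrite eqn_leq Tk kT.
by rewrite kE in e12; rewrite e12.
Qed.

Lemma cexpD (B : pred ep) (f g : ep -> R) :
  cexp B (fun e => f e + g e) = cexp B f + cexp B g.
Proof.
rewrite /cexp -mulrDl -big_split /=; congr (_ / _).
by apply: eq_bigr => e _; rewrite mulrDr.
Qed.

Lemma cexp_cst (B : pred ep) (c : R) : Pr B != 0 -> cexp B (fun _ => c) = c.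
Proof. by move=> PrB; rewrite /cexp -big_distrl /= mulrAC divff ?mul1r. Qed.

Hypotheses (p0_ge0 : forall s, 0 <= p0 s) (P_ge0 : forall s a s', 0 <= P s a s')
  (pol_ge0 : forall s a, 0 <= pol s a).

Lemma epprob_ge0 (e : ep) : 0 <= epprob e.
Proof.
rewrite /epprob !mulr_ge0 // prodr_ge0 // => i _.
exact: mulr_ge0.
Qed.

Lemma Pr_gt0 (B : pred ep) (e : ep) : B e -> 0 < epprob e -> 0 < Pr B.
Proof.
move=> Be pe; rewrite /Pr (bigD1 e) //= ltr_pwDl //.
by apply: sumr_ge0 => *; apply: epprob_ge0.
Qed.

Lemma Pr_hist_gt0 k (e : ep) : 0 < epprob e -> 0 < Pr (ev_hist k e).
Proof. exact/Pr_gt0/ev_hist_refl. Qed.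

Lemma Pr_at_gt0 k (e : ep) :
  0 < epprob e -> 0 < Pr (@ev_at S A T k (sa e k).1 (sa e k).2).
Proof. by apply: Pr_gt0; rewrite /ev_at -surjective_pairing. Qed.

Lemma eq_cexp_pos (B : pred ep) (f g : ep -> R) :
  (forall e, B e -> 0 < epprob e -> f e = g e) -> cexp B f = cexp B g.
Proof.
move=> fg; congr (_ / _); apply: eq_bigr => e Be.
have := epprob_ge0 e; rewrite le0r => /orP[/eqP ->|pe]; first by rewrite !mul0r.
by rewrite fg.
Qed.

Lemma cexp_hist_qtilde (rT : S -> A -> R) k (e : ep) :
  (k <= T)%N -> 0 < epprob e ->
  cexp (ev_hist k e) (dret rT) = qtilde T p0 P pol rT k (sa e k).1 (sa e k).2.
Proof.
move=> kT pe; apply: cexp_markov => //.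
- exact: ev_hist_past.
- by move=> e'; apply: ev_hist_at.
- exact: dret_future.
- by rewrite gt_eqF ?Pr_hist_gt0.
- by rewrite gt_eqF ?Pr_at_gt0.
Qed.

End EpisodeProbability.

Section Rewards.
Variables (R : realFieldType) (S A : finType) (T : nat) (r : nat -> episode S A T -> R).

Definition partial_ret t (e : episode S A T) := \sum_(j < t.+1) r j e.

Lemma ret_split t e : (t <= T)%N -> ret r e = partial_ret t e + future r t e.
Proof.
move=> tT; rewrite /ret /partial_ret /future -(big_mkord xpredT (fun j => r j e)).
by rewrite (big_cat_nat (leq0n t.+1)) //= big_mkord.
Qed.

Lemma partial_retS t e : partial_ret t.+1 e = partial_ret t e + r t.+1 e.
Proof. exact: big_ord_recr. Qed.

Lemma partial_ret_hist t e e' : history_dependent r -> ev_hist t e e' ->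
  partial_ret t e' = partial_ret t e.
Proof.
move=> hdep /forallP he'; apply: eq_bigr => j _; apply: hdep => i ij.
apply/eqP; apply: (implyP (he' i)); exact: leq_trans ij (ltn_ord j).
Qed.

Lemma future_last e : future r T e = 0.
Proof. exact: big_geq. Qed.

End Rewards.

Section Redistribution.
Variables (R : realFieldType) (S A : finType) (T : nat)
  (p0 : S -> R) (P : S -> A -> S -> R) (pol : S -> A -> R)
  (rT : S -> A -> R) (r : nat -> episode S A T -> R).
Local Notation ep := (episode S A T).
Local Notation epprob := (epprob p0 P pol).
Local Notation Pr := (Pr p0 P pol).
Local Notation cexp := (cexp p0 P pol).

Hypotheses (p0_ge0 : forall s, 0 <= p0 s) (P_ge0 : forall s a s', 0 <= P s a s')
  (pol_ge0 : forall s a, 0 <= pol s a).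
Hypothesis r_hist : history_dependent r.
Hypothesis ret_equiv : forall e, 0 < epprob e -> dret rT e = ret r e.
Hypothesis r_optimal : forall t s a, (t < T)%N -> 0 < Pr (@ev_at S A T t s a) ->
  cexp (ev_at t s a) (future r t) = 0.
Hypothesis future_markov : forall t (e : ep), (t <= T)%N -> 0 < Pr (ev_hist t e) ->
  cexp (ev_at t (sa e t).1 (sa e t).2) (future r t) = cexp (ev_hist t e) (future r t).

Lemma cexp_hist_future k (e : ep) : (k <= T)%N -> 0 < epprob e ->
  cexp (ev_hist k e) (future r k) = 0.
Proof.
move=> kT pe; case: (ltnP k T) => [kT'|Tk].
  by rewrite -future_markov ?r_optimal ?Pr_at_gt0 ?Pr_hist_gt0.
have -> : k = T by apply/eqP; rewrite eqn_leq kT Tk.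
by rewrite /cexp big1 ?mul0r // => e' _; rewrite future_last mulr0.
Qed.

Lemma cexp_hist_dret k (e : ep) : (k <= T)%N -> 0 < epprob e ->
  cexp (ev_hist k e) (dret rT) = partial_ret r k e.
Proof.
move=> kT pe.
transitivity (cexp (ev_hist k e) (fun e' => partial_ret r k e + future r k e')).
  apply: (eq_cexp_pos p0_ge0 P_ge0 pol_ge0) => e' he' pe'.
  by rewrite ret_equiv // (ret_split _ _ kT) (partial_ret_hist r_hist he').
rewrite cexpD cexp_cst ?cexp_hist_future ?addr0 //.
by rewrite gt_eqF ?(Pr_hist_gt0 p0_ge0 P_ge0 pol_ge0).
Qed.

Lemma reward_qtilde_diff t (e : ep) : (1 <= t <= T)%N -> 0 < epprob e ->
  r t e = qtilde T p0 P pol rT t (sa e t).1 (sa e t).2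
          - qtilde T p0 P pol rT t.-1 (sa e t.-1).1 (sa e t.-1).2.
Proof.
case/andP=> t1 tT pe; have tT' : (t.-1 <= T)%N by rewrite (leq_trans (leq_pred t)).
rewrite -!cexp_hist_qtilde // !cexp_hist_dret //.
by case: t t1 {tT tT'} => // t _; rewrite partial_retS addrC addKr.
Qed.

End Redistribution.

Theorem mainTheorem2 (R : realFieldType) (S A : finType) (T : nat)
  (p0 : S -> R) (P : S -> A -> S -> R) (pol : S -> A -> R)
  (tm : S -> nat) (rT : S -> A -> R) (r : nat -> episode S A T -> R) :
  (* MDP dynamics and policy *)
  is_dist p0 ->
  (forall s a, is_dist (P s a)) ->
  (forall s, is_dist (pol s)) ->
  (* time-aware states *)
  (forall s, 0 < p0 s -> tm s = 0%N) ->
  (forall s a s', 0 < P s a s' -> tm s' = (tm s).+1) ->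
  (* the reward redistribution: higher-order Markov rewards *)
  history_dependent r ->
  (* strict return-equivalence *)
  (forall pol', (forall s, is_dist (pol' s)) ->
     cexp p0 P pol' (@predT (episode S A T)) (dret rT) = cexp p0 P pol' (@predT (episode S A T)) (ret r)) ->
  (forall pol', (forall s, is_dist (pol' s)) ->
     forall e, 0 < epprob p0 P pol' e -> dret rT e = ret r e) ->
  (* optimality: kappa(T-t-1, t) = 0 for 0 <= t <= T-1 *)
  (forall t s a, (t < T)%N -> 0 < Pr p0 P pol (@ev_at S A T t s a) ->
     cexp p0 P pol (ev_at t s a) (future r t) = 0) ->
  (* future expected rewards depend on the history only through (s_t, a_t) *)
  (forall t (e : episode S A T), (t <= T)%N ->
     0 < Pr p0 P pol (ev_hist t e) ->
     cexp p0 P pol (ev_at t (sa e t).1 (sa e t).2) (future r t)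
     = cexp p0 P pol (ev_hist t e) (future r t)) ->
  forall t s a s' a', (1 <= t <= T)%N ->
    0 < Pr p0 P pol (@ev_at2 S A T t s a s' a') ->
    cexp p0 P pol (ev_at2 t s a s' a') (r t)
    = @qtilde R S A T p0 P pol rT t s' a' - @qtilde R S A T p0 P pol rT t.-1 s a.
Proof.
move=> [p0_ge0 _] hP hpol _ _ r_hist _ ret_equiv r_optimal future_markov
  t s a s' a' t_range Pr_at2_gt0.
have P_ge0 s1 a1 s2 : 0 <= P s1 a1 s2 by case: (hP s1 a1).
have pol_ge0 s1 a1 : 0 <= pol s1 a1 by case: (hpol s1).
rewrite -[RHS](@cexp_cst _ _ _ T p0 P pol (ev_at2 t s a s' a')) ?gt_eqF //.
apply: (eq_cexp_pos p0_ge0 P_ge0 pol_ge0) => e /andP[/eqP at1 /eqP at2] pe.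
by rewrite (reward_qtilde_diff p0_ge0 P_ge0 pol_ge0 r_hist (ret_equiv pol hpol)
  r_optimal future_markov t_range pe) at1 at2.
Qed.
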